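(* Let $q$ be a prime, let $m \geq 1$ be an integer, and let $u$ be an integer with $0 \leq u \leq q-2$. Let $\mathcal{RM}_q(u,m) \subseteq \mathbb{F}_q^{q^m}$ be the code consisting of the vectors $\left(f(\alpha)\right)_{\alpha \in \mathbb{F}_q^m}$ (coordinates indexed by the points of $\mathbb{F}_q^m$), where $f$ ranges over all polynomials in $\mathbb{F}_q[x_1,\ldots,x_m]$ of total degree at most $u$, and let $\mathcal{RM}^{\perp}_q(u,m)$ be its dual code with respect to the standard bilinear form. Then for any $u+2$ distinct points of $\mathbb{F}_q^m$ lying on a common affine line, i.e. points $\mathbf{p}_1, \mathbf{p}_1 + t_1\mathbf{h}, \ldots, \mathbf{p}_1 + t_{u+1}\mathbf{h}$ with $\mathbf{p}_1 \in \mathbb{F}_q^m$, $\mathbf{h} \in \mathbb{F}_q^m\setminus\{\mathbf{0}\}$ and $t_1,\ldots,t_{u+1}$ distinct nonzero elements of $\mathbb{F}_q$, there exists a codeword of $\mathcal{RM}^{\perp}_q(u,m)$ of minimum nonzero Hamming weight whose support is exactly this set of $u+2$ points.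
   Context: The support of a vector is the set of coordinates where it is nonzero, identified with a set of points of $\mathbb{F}_q^m$. For $u \leq q-2$ the minimum nonzero Hamming weight of $\mathcal{RM}^{\perp}_q(u,m)$ equals $u+2$. *)

From HB Require Import structures.
From mathcomp Require Import all_boot all_order all_algebra all_field.
From mathcomp Require Import mpoly.
Set Implicit Arguments. Unset Strict Implicit. Unset Printing Implicit Defensive.
Import GRing.Theory.
Local Open Scope ring_scope.

(* Points of F^m are row vectors 'rV[F]_m; a word of length q^m is a function
   from points to F. *)
Definition word (F : finFieldType) (m : nat) := {ffun 'rV[F]_m -> F}.

Definition evalpt (F : finFieldType) (m : nat) (f : {mpoly F[m]}) (a : 'rV[F]_m) : F :=
  f.@[fun i => a ord0 i].

(* RM_q(u,m): evaluation vectors of polynomials of total degree <= u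
   (msize f = 1 + total degree of f, and msize 0 = 0). *)
Definition inRM (F : finFieldType) (u m : nat) (c : word F m) : Prop :=
  exists f : {mpoly F[m]}, (msize f <= u.+1)%N /\ c = [ffun a => evalpt f a].

Definition dotw (F : finFieldType) (m : nat) (c w : word F m) : F :=
  \sum_(a : 'rV[F]_m) c a * w a.

Definition inRMdual (F : finFieldType) (u m : nat) (c : word F m) : Prop :=
  forall w : word F m, inRM u w -> dotw c w = 0.

Definition wsupp (F : finFieldType) (m : nat) (c : word F m) : {set 'rV[F]_m} :=
  [set a | c a != 0].

Definition hweight (F : finFieldType) (m : nat) (c : word F m) : nat := #|wsupp c|.

(* A nonzero word of the dual code has weight at least u+2: on fewer points
   one can interpolate, i.e. find a product of at most u affine forms vanishing
   on all support points but one.  Conversely, any u+2 points on an affine line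
   carry a dual codeword: restricted to the line, a polynomial of total degree
   at most u becomes a univariate polynomial of degree at most u, and u+2
   evaluations of such polynomials satisfy a nontrivial linear relation.  Its
   support has at most u+2 points, hence exactly these. *)

From HB Require Import structures.
From mathcomp Require Import all_boot all_order all_algebra all_field.
From mathcomp Require Import mpoly.
From mathcomp Require Import zify.
Set Implicit Arguments. Unset Strict Implicit. Unset Printing Implicit Defensive.
Import GRing.Theory.
Local Open Scope ring_scope.

Section Weight.
Variables (F : finFieldType) (m : nat).
Implicit Types (a b : 'rV[F]_m) (c : word F m).

Lemma msize_prod_le (I : Type) (r : seq I) (G : I -> {mpoly F[m]}) :
  (forall i, (msize (G i) <= 2)%N) -> (msize (\prod_(i <- r) G i) <= (size r).+1)%N.
Proof.
move=> szG; elim: r => [|i r IHr]; first by rewrite big_nil msize1.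
rewrite big_cons.
have [-> | nzGi] := eqVneq (G i) 0; first by rewrite mul0r msize0.
have [-> | nzP] := eqVneq (\prod_(j <- r) G j) 0; first by rewrite mulr0 msize0.
rewrite msizeM //= -subn1; move: (szG i) IHr.
set a := mmeasure _ (G i); set b := mmeasure _ (\prod_(j <- r) G j); lia.
Qed.

Lemma wsupp_neq0 c : c != 0 -> exists a, a \in wsupp c.
Proof.
move=> nzc; apply/set0Pn; apply: contraNneq nzc => supp0.
apply/eqP/ffunP => a; rewrite ffunE.
by have := in_set0 a; rewrite -supp0 inE => /negbFE/eqP.
Qed.

Definition affine_separator a b : {mpoly F[m]} :=
  if [pick i | a ord0 i != b ord0 i] is Some i then 'X_i - (b ord0 i)%:MP else 1.

Lemma msize_affine_separator a b : (msize (affine_separator a b) <= 2)%N.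
Proof.
rewrite /affine_separator; case: pickP => [i _|_]; last by rewrite msize1.
apply: leq_trans (msizeD_le _ _) _; rewrite msizeN msizeC geq_max msizeX mdeg1.
by case: (_ != 0).
Qed.

Lemma affine_separator_root a b : a != b -> evalpt (affine_separator a b) b = 0.
Proof.
move=> neq_ab; rewrite /affine_separator; case: pickP => [i _|same].
  by rewrite /evalpt mevalB mevalXU mevalC subrr.
by case/eqP: neq_ab; apply/rowP => j; apply/eqP/negbFE/same.
Qed.

Lemma affine_separator_nonroot a b : evalpt (affine_separator a b) a != 0.
Proof.
rewrite /affine_separator; case: pickP => [i neq_i|_].
  by rewrite /evalpt mevalB mevalXU mevalC subr_eq0.
by rewrite /evalpt meval1 oner_neq0.
Qed.

Lemma exists_vanishing_poly (B : {set 'rV[F]_m}) a : a \notin B ->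
  exists f : {mpoly F[m]}, [/\ (msize f <= #|B|.+1)%N, evalpt f a != 0
                             & forall b, b \in B -> evalpt f b = 0].
Proof.
move=> aB; exists (\prod_(b <- enum B) affine_separator a b); split.
- by rewrite cardE msize_prod_le // => b; apply: msize_affine_separator.
- rewrite /evalpt rmorph_prod prodf_seq_neq0; apply/allP => b _.
  exact: affine_separator_nonroot.
- move=> b bB; rewrite /evalpt rmorph_prod (big_rem b) ?mem_enum //=.
  have neq_ab : a != b by apply: contraNneq aB => ->.
  by rewrite [meval _ _]affine_separator_root // mul0r.
Qed.

Lemma RMdual_weight_ge u c : inRMdual u c -> c != 0 -> (u.+2 <= hweight c)%N.
Proof.
move=> dual_c nzc; rewrite leqNgt; apply/negP => small_c.
have [a ca] := wsupp_neq0 nzc.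
have [f [szf fa fB]] := exists_vanishing_poly (negbT (setD11 a (wsupp c))).
have: inRM u [ffun x => evalpt f x].
  exists f; split => //; apply: leq_trans szf _.
  by move: small_c; rewrite /hweight (cardsD1 a) ca.
move/dual_c/eqP; apply/negP; rewrite /dotw (bigD1 a) //= big1 ?addr0.
  by move: ca; rewrite inE ffunE => ca; rewrite mulf_neq0.
move=> x xa; have [cx0 | cx] := eqVneq (c x) 0; first by rewrite cx0 mul0r.
by rewrite ffunE fB ?mulr0 // !inE xa.
Qed.

End Weight.

Section Line.
Variables (F : finFieldType) (m : nat) (p1 h : 'rV[F]_m).

Lemma size_prod_linear_exp_le (I : Type) (r : seq I) (G : I -> {poly F}) (k : I -> nat) :
  (forall i, (size (G i) <= 2)%N) ->
  (size (\prod_(i <- r) G i ^+ k i)%R <= (\sum_(i <- r) k i).+1)%N.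
Proof.
move=> szG; elim: r => [|i r IHr]; first by rewrite !big_nil size_poly1.
rewrite !big_cons; apply: leq_trans (size_polyMleq _ _) _.
have szGk : (size (G i ^+ k i) <= (k i).+1)%N.
  apply: leq_trans (size_poly_exp_leq _ _) _; rewrite ltnS.
  by rewrite -[X in (_ <= X)%N]mul1n leq_mul2r -subn1 leq_subLR orbC szG.
move: szGk IHr; lia.
Qed.

Lemma evalpt_line (f : {mpoly F[m]}) : exists P : {poly F},
  (size P <= msize f)%N /\ forall s, evalpt f (p1 + s *: h) = P.[s].
Proof.
pose lin i := (p1 ord0 i)%:P + h ord0 i *: 'X.
exists (\sum_(mo <- msupp f) f@_mo *: \prod_(i < m) lin i ^+ mo i); split.
  apply: leq_trans (size_sum _ _ _) _; apply/bigmax_leqP_seq => mo mo_f _.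
  apply: leq_trans (size_scale_leq _ _) _; apply: leq_trans (msize_mdeg_lt mo_f).
  rewrite mdegE; apply: size_prod_linear_exp_le => i.
  apply: leq_trans (size_polyD _ _) _; rewrite geq_max size_polyC.
  by rewrite (leq_trans (size_scale_leq _ _)) ?size_polyX //; case: (_ != 0).
move=> s; rewrite /evalpt mevalE horner_sum; apply: eq_bigr => mo _.
rewrite hornerZ horner_prod; congr (_ * _); apply: eq_bigr => i _.
by rewrite horner_exp hornerD hornerC hornerZ hornerX !mxE mulrC.
Qed.

Lemma line_point_inj : h != 0 -> injective (fun s : F => p1 + s *: h).
Proof.
move=> nzh s s' /addrI /eqP; rewrite -subr_eq0 -scalerBl scaler_eq0 (negbTE nzh).
by rewrite orbF subr_eq0 => /eqP.
Qed.

End Line.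

Lemma exists_poly_annihilator (F : fieldType) (u n : nat) (s : 'I_n -> F) :
  (u.+1 < n)%N -> exists2 v : 'rV[F]_n, v != 0 &
    forall P : {poly F}, (size P <= u.+1)%N -> \sum_j v ord0 j * P.[s j] = 0.
Proof.
move=> ltun; pose A : 'M[F]_(n, u.+1) := \matrix_(j, k) s j ^+ k.
have [v /sub_kermxP vA nzv] : exists2 v : 'rV_n, (v <= kermx A)%MS & v != 0.
  apply/rowV0Pn; rewrite kermx_eq0; apply: contraL ltun => /eqP rkA.
  by rewrite -leqNgt -[X in (X <= _)%N]rkA rank_leq_col.
exists v => // P szP; under eq_bigr do rewrite (horner_coef_wide _ szP) big_distrr.
rewrite exchange_big big1 //= => k _.
have := congr1 (fun M : 'rV_u.+1 => M ord0 k) vA; rewrite !mxE => vAk.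
transitivity (P`_k * \sum_j v ord0 j * A j k); last by rewrite vAk mulr0.
by rewrite big_distrr; apply: eq_bigr => j _; rewrite mxE mulrCA.
Qed.

Lemma dotw_delta_sum (F : finFieldType) (m n : nat) (z : 'I_n -> 'rV[F]_m)
    (v : 'I_n -> F) (w : word F m) :
  dotw [ffun x => \sum_j v j * (x == z j)%:R] w = \sum_j v j * w (z j).
Proof.
rewrite /dotw; under eq_bigr do rewrite ffunE big_distrl.
rewrite exchange_big; apply: eq_bigr => j _ /=.
rewrite (bigD1 (z j)) //= eqxx mulr1 big1 ?addr0 // => x /negbTE->.
by rewrite mulr0 mul0r.
Qed.

Lemma RMdual_on_line (F : finFieldType) (m u : nat) (p1 h : 'rV[F]_m) (T : {set F}) :
  h != 0 -> (u.+2 <= #|T|)%N -> exists c : word F m,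
  [/\ inRMdual u c, c != 0 & wsupp c \subset [set p1 + s *: h | s in T]].
Proof.
move=> nzh szT; pose e : 'I_#|T| -> F := enum_val (A := mem T).
pose pt s := p1 + s *: h; have pt_inj := line_point_inj (p1 := p1) nzh.
have [v nzv annih_v] := @exists_poly_annihilator _ u _ e szT.
pose c : word F m := [ffun x => \sum_j v ord0 j * (x == pt (e j))%:R].
exists c; split.
- move=> w [f [szf ->]]; rewrite dotw_delta_sum.
  have [P [szP fP]] := evalpt_line p1 h f.
  apply: etrans (annih_v P (leq_trans szP szf)).
  by apply: eq_bigr => j _; rewrite ffunE fP.
- apply: contraNneq nzv => c0; apply/eqP/rowP => j; rewrite mxE.
  have := congr1 (fun g : word F m => g (pt (e j))) c0; rewrite !ffunE => <-.
  rewrite (bigD1 j) //= eqxx mulr1 big1 ?addr0 // => k neq_kj.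
  by rewrite (inj_eq pt_inj) (inj_eq enum_val_inj) eq_sym (negbTE neq_kj) mulr0.
- apply/subsetP => x; rewrite inE ffunE; apply: contraNT => x_off.
  apply/eqP/big1 => j _; case: eqP => [x_pt|]; last by rewrite mulr0.
  by case/negP: x_off; rewrite x_pt; apply/imsetP; exists (e j) => //; apply: enum_valP.
Qed.

Theorem mainTheorem2 (q : nat) (Hq : prime q) (m : nat) (Hm : (1 <= m)%N)
  (u : nat) (Hu : (u <= q - 2)%N)
  (p1 h : 'rV['F_q]_m) (Hh : h != 0)
  (t : 'I_u.+1 -> 'F_q) (Ht_inj : injective t) (Ht_nz : forall i, t i != 0) :
  exists c : word 'F_q m,
    [/\ inRMdual u c,
        c != 0,
        (forall c' : word 'F_q m, inRMdual u c' -> c' != 0 ->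
           (hweight c <= hweight c')%N)
      & wsupp c = p1 |: [set p1 + t i *: h | i : 'I_u.+1]].
Proof.
pose T : {set 'F_q} := 0 |: [set t i | i : 'I_u.+1].
have cardT : #|T| = u.+2.
  have t_nz : 0 \notin [set t i | i : 'I_u.+1].
    by apply/imsetP => -[i _ /esym/eqP]; apply/negP.
  by rewrite cardsU1 t_nz card_imset // card_ord.
have [c [dual_c nzc supp_c]] := RMdual_on_line p1 (u := u) Hh (eq_leq (esym cardT)).
pose line := [set p1 + s *: h | s in T].
have card_line : (#|line| <= u.+2)%N by rewrite -cardT leq_imset_card.
have wsupp_c : wsupp c = line.
  by apply/eqP; rewrite eqEcard supp_c (leq_trans card_line (RMdual_weight_ge dual_c nzc)).
exists c; split => // [c' dual_c' nzc'|].
  by rewrite /hweight wsupp_c (leq_trans card_line (RMdual_weight_ge dual_c' nzc')).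
by rewrite wsupp_c /line imsetU1 scale0r addr0 -imset_comp.
Qed.
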